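(* Let $S\subseteq\mathbb{R}$ and let $(X_t)_{t\ge 0}$ be a stochastic process on $S$, adapted to a filtration $(\mathcal{F}_t)_{t\ge 0}$. Let $h\colon S\to\mathbb{R}^{\ge 0}$ be a convex and greed-admitting function such that for all $t\ge 0$ the drift condition \[ \mathbb{E}[X_t-X_{t+1}\mid \mathcal{F}_t]\ \ge\ h(X_t) \] holds (equivalently, $\mathbb{E}[X_{t+1}\mid\mathcal{F}_t]\le \tilde h(X_t)$, where $\tilde h(x)=x-h(x)$). Then for all $t\ge 0$, \[ \mathbb{E}[X_t\mid \mathcal{F}_0]\ \le\ \tilde h^t(X_0) \qquad\text{and}\qquad \mathbb{E}[X_t]\ \le\ \tilde h^t(\mathbb{E}[X_0]). \]
   Context: A function $h\colon S\to\mathbb{R}$ is called greed-admitting if the function $x\mapsto x-h(x)$ is monotone non-decreasing on $S$. For a function $f$ and $i\ge 0$, $f^i$ denotes the $i$-fold self-composition of $f$ ($f^0$ is the identity). Here $\tilde h(x)=x-h(x)$, and its iterates are taken as in the paper (the iterates of $\tilde h$ are assumed to be defined). *)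

From HB Require Import structures.
From mathcomp Require Import all_boot all_order all_algebra.
From mathcomp Require Import all_classical all_reals all_analysis.
Set Implicit Arguments. Unset Strict Implicit. Unset Printing Implicit Defensive.
Import Order.TTheory GRing.Theory Num.Theory.
Local Open Scope classical_set_scope.
Local Open Scope ring_scope.

Section Defs.
Context {d : measure_display} {T : measurableType d} {R : realType}.

Definition sub_sigma (G : set (set T)) : Prop :=
  sigma_algebra setT G /\ G `<=` measurable.

Definition G_measurable (G : set (set T)) (f : T -> R) : Prop :=
  forall B : set R, measurable B -> G (f @^-1` B).

Definition filtration (F : nat -> set (set T)) : Prop :=
  (forall t, sub_sigma (F t)) /\ (forall t, F t `<=` F t.+1).

Definition adapted (F : nat -> set (set T)) (X : nat -> T -> R) : Prop :=
  forall t, G_measurable (F t) (X t).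

Definition is_cond_exp (P : probability T R) (G : set (set T)) (Z Y : T -> R)
  : Prop :=
  [/\ G_measurable G Y, P.-integrable setT (EFin \o Y) &
      forall A, G A ->
        (\int[P]_(x in A) (Y x)%:E = \int[P]_(x in A) (Z x)%:E)%E ].
End Defs.

Definition convex_set_R {R : realType} (S : set R) : Prop :=
  forall x y z, S x -> S y -> x <= z <= y -> S z.

Definition convex_on {R : realType} (S : set R) (h : R -> R) : Prop :=
  forall x y (l : R), S x -> S y -> 0 <= l <= 1 ->
    h (l * x + (1 - l) * y) <= l * h x + (1 - l) * h y.

Definition htilde {R : realType} (h : R -> R) : R -> R := fun x => x - h x.

Definition greed_admitting {R : realType} (S : set R) (h : R -> R) : Prop :=
  forall x y, S x -> S y -> x <= y -> htilde h x <= htilde h y.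

(* For an event A of F_0 of positive probability write avg_A f for the mean of
   f over A.  Since A lies in every F_t, the drift condition averages to
   avg_A X_{t+1} <= avg_A X_t - avg_A Y_t, and Jensen's inequality for the
   convex h gives h (avg_A X_t) <= avg_A Y_t, i.e. avg_A X_{t+1} <= h~ (avg_A X_t).
   As h~ is non-decreasing on S, induction yields avg_A X_t <= h~^t (avg_A X_0);
   A = Omega is the bound on E[X_t].  For the conditional bound, if a version Y
   of E[X_t | F_0] satisfied r <= Y and h~^t X_0 < r on an F_0-event B of
   positive probability, then avg_B X_0 would stay in the interval
   {x in S | h~^t x < r} and r <= avg_B Y = avg_B X_t <= h~^t (avg_B X_0) < r;
   countably many rational thresholds r cover every violation. *)

From HB Require Import structures.
From mathcomp Require Import all_boot all_order all_algebra.
From mathcomp Require Import all_classical all_reals all_analysis.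
From mathcomp Require Import lra ring measurable_realfun.
Set Implicit Arguments. Unset Strict Implicit. Unset Printing Implicit Defensive.
Import Order.TTheory GRing.Theory Num.Theory.
Local Open Scope classical_set_scope.
Local Open Scope ring_scope.

Section convex_function.
Context {R : realType} (S : set R) (h : R -> R).
Hypothesis hS : convex_on S h.

Lemma convex_on_slope_le x m y : S x -> S m -> S y -> x < m -> m < y ->
  (h m - h x) / (m - x) <= (h y - h m) / (y - m).
Proof.
move=> Sx Sm Sy xm my.
have mx0 : 0 < m - x by rewrite subr_gt0.
have ym0 : 0 < y - m by rewrite subr_gt0.
pose l := (y - m) / (y - x).
have lE : l * (y - x) = y - m by rewrite /l divfK// gt_eqF// subr_gt0 (lt_trans xm).
have l01 : 0 <= l <= 1.
  by rewrite divr_ge0 ?ler_pdivrMr ?mul1r ?subr_gt0 ?ltW//=; lra.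
have := hS Sx Sy l01.
have -> : l * x + (1 - l) * y = m.
  by rewrite -[RHS](_ : y - l * (y - x) = m); [ring | rewrite lE; ring].
move=> /(ler_wpM2l (ltW (addr_gt0 mx0 ym0))).
have -> : (m - x + (y - m)) * (l * h x + (1 - l) * h y) =
          (l * (y - x)) * h x + ((y - x) - l * (y - x)) * h y by ring.
rewrite lE ler_pdivrMr// mulrAC ler_pdivlMr//; lra.
Qed.

Lemma convex_on_supporting_line m : S m ->
  (exists2 x, S x & x < m) -> (exists2 y, S y & m < y) ->
  exists s, forall z, S z -> h m + s * (z - m) <= h z.
Proof.
move=> Sm [x0 Sx0 x0m] [y0 Sy0 my0].
pose slopes := [set (h m - h x) / (m - x) | x in [set x | S x /\ x < m]].
have slopes_ub : ubound slopes ((h y0 - h m) / (y0 - m)).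
  by move=> _ [x [Sx xm] <-]; exact: convex_on_slope_le.
exists (sup slopes) => z Sz.
have [zm|mz|<-] := ltgtP z m; last by rewrite subrr mulr0 addr0.
- have : (h m - h z) / (m - z) <= sup slopes.
    by apply: ub_le_sup; [exists ((h y0 - h m) / (y0 - m)) | exists z].
  rewrite ler_pdivrMr ?subr_gt0//; lra.
- have : sup slopes <= (h z - h m) / (z - m).
    apply: ge_sup; first by exists ((h m - h x0) / (m - x0)), x0.
    by move=> _ [x [Sx xm] <-]; exact: convex_on_slope_le.
  rewrite ler_pdivlMr ?subr_gt0//; lra.
Qed.

End convex_function.

Section average.
Context {d : measure_display} {T : measurableType d} {R : realType}.
Variable P : probability T R.
Implicit Types (A : set T) (f g : T -> R).

Definition average A f := \int[P]_(x in A) f x / fine (P A).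

Lemma integrable_in A f : measurable A ->
  P.-integrable setT (EFin \o f) -> P.-integrable A (EFin \o f).
Proof. by move=> mA; apply: integrableS measurableT mA (@subsetT _ A). Qed.

Lemma integrable_affine f a b : P.-integrable setT (EFin \o f) ->
  P.-integrable setT (EFin \o (fun x => a + b * f x)).
Proof.
move=> fi; under [X in _.-integrable _ X]funext do rewrite /= EFinD EFinM.
apply: integrableD => //; first exact: finite_measure_integrable_cst.
exact: integrableZl.
Qed.

Lemma Rintegral_affine A f a b : measurable A -> P.-integrable setT (EFin \o f) ->
  \int[P]_(x in A) (a + b * f x) = a * fine (P A) + b * \int[P]_(x in A) f x.
Proof.
move=> mA fi; have fAi := integrable_in mA fi.
rewrite RintegralD// ?Rintegral_cst ?RintegralZl//.
- exact: finite_measure_integrable_cst.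
- under [X in _.-integrable _ X]funext do rewrite /= EFinM.
  exact: integrableZl.
Qed.

Lemma le_Rintegral_ae A f g : measurable A ->
  P.-integrable setT (EFin \o f) -> P.-integrable setT (EFin \o g) ->
  {ae P, forall x, A x -> f x <= g x} ->
  \int[P]_(x in A) f x <= \int[P]_(x in A) g x.
Proof.
move=> mA fi gi [N [mN PN fgN]].
have mAN : measurable (A `\` N) by exact: measurableD.
have off_null k : P.-integrable setT (EFin \o k) ->
    \int[P]_(x in A) k x = \int[P]_(x in A `\` N) k x.
  by move=> ki; rewrite /Rintegral (negligible_integral mN mA)// integrable_in.
rewrite (off_null f fi) (off_null g gi); apply: le_Rintegral => //.
- exact: integrable_in.
- exact: integrable_in.
by move=> x [Ax Nx]; apply: contrapT => fgx; apply/Nx/fgN => /(_ Ax).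
Qed.

Lemma Rintegral_ge0_eq0_ae A f : measurable A -> P.-integrable setT (EFin \o f) ->
  (forall x, A x -> 0 <= f x) -> \int[P]_(x in A) f x = 0 ->
  {ae P, forall x, A x -> f x = 0}.
Proof.
move=> mA fi f0 intf0; have fAi := integrable_in mA fi.
have : (\int[P]_(x in A) `|(EFin \o f) x|)%E = 0%E.
  rewrite -[RHS]/(0%:E) -intf0 /Rintegral fineK; last exact: integrable_fin_num.
  by apply: eq_integral => x /set_mem Ax /=; rewrite ger0_norm// f0.
move/(ae_eq_integral_abs P mA (measurable_int P fAi)).
by apply: filterS => x fx0 /fx0 [].
Qed.

Lemma ae_in_exists A (Q : T -> Prop) : measurable A -> 0 < fine (P A) ->
  {ae P, forall x, A x -> Q x} -> exists2 x, A x & Q x.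
Proof.
move=> mA PA [N [mN PN AQN]]; apply: contrapT => noQ.
have AN : A `<=` N by move=> x Ax; apply: AQN => /(_ Ax) Qx; apply: noQ; exists x.
have PA0 : P A = 0%E.
  by apply/eqP; rewrite -measure_le0 -PN le_measure ?inE.
by move: PA; rewrite PA0 ltxx.
Qed.

Section nonnull_event.
Variable A : set T.
Hypotheses (mA : measurable A) (PA : 0 < fine (P A)).

Lemma Rintegral_average f : \int[P]_(x in A) f x = average A f * fine (P A).
Proof. by rewrite divfK// gt_eqF. Qed.

Lemma ae_eq_average_of_ge f : P.-integrable setT (EFin \o f) ->
  (forall x, A x -> average A f <= f x) ->
  {ae P, forall x, A x -> f x = average A f}.
Proof.
move=> fi; set m := average A f => fge.
have : {ae P, forall x, A x -> - m + 1 * f x = 0}.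
  apply: Rintegral_ge0_eq0_ae => //; first exact: integrable_affine.
    by move=> x /fge; lra.
  by rewrite Rintegral_affine// Rintegral_average -/m; ring.
by apply: filterS => x fxm /fxm; lra.
Qed.

Lemma ae_eq_average_of_le f : P.-integrable setT (EFin \o f) ->
  (forall x, A x -> f x <= average A f) ->
  {ae P, forall x, A x -> f x = average A f}.
Proof.
move=> fi; set m := average A f => fle.
have : {ae P, forall x, A x -> m + (-1) * f x = 0}.
  apply: Rintegral_ge0_eq0_ae => //; first exact: integrable_affine.
    by move=> x /fle; lra.
  by rewrite Rintegral_affine// Rintegral_average -/m; ring.
by apply: filterS => x fxm /fxm; lra.
Qed.

Lemma average_in_interval (S : set R) f : is_interval S ->
  P.-integrable setT (EFin \o f) -> (forall x, A x -> S (f x)) -> S (average A f).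
Proof.
move=> Sint fi fS; set m := average A f; apply: contrapT => Sm.
have one_side : (forall x, A x -> f x <= m) \/ (forall x, A x -> m <= f x).
  have [[x Ax mfx]|nogt] := pselect (exists2 x, A x & m < f x); last first.
    by left => y Ay; rewrite leNgt; apply/negP => mfy; apply: nogt; exists y.
  right => y Ay; rewrite leNgt; apply/negP => fym; apply: Sm.
  by apply: (Sint _ _ (fS _ Ay) (fS _ Ax)); rewrite (ltW fym) (ltW mfx).
have [x Ax fxm] : exists2 x, A x & f x = m.
  apply: ae_in_exists => //.
  by case: one_side; [exact: ae_eq_average_of_le | exact: ae_eq_average_of_ge].
by apply: Sm; rewrite -fxm; exact: fS.
Qed.

Lemma jensen_average (S : set R) (h : R -> R) f g :
  is_interval S -> convex_on S h ->
  P.-integrable setT (EFin \o f) -> P.-integrable setT (EFin \o g) ->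
  (forall x, A x -> S (f x)) -> {ae P, forall x, A x -> h (f x) <= g x} ->
  h (average A f) <= average A g.
Proof.
move=> Sint hconv fi gi fS hfg; set m := average A f.
have Sm : S m by exact: average_in_interval.
rewrite ler_pdivlMr//.
have constant_case : {ae P, forall x, A x -> f x = m} ->
    h m * fine (P A) <= \int[P]_(x in A) g x.
  move=> fm; rewrite -Rintegral_cst//; apply: le_Rintegral_ae => //.
    exact: finite_measure_integrable_cst.
  by apply: filterS2 fm hfg => x fxm hfx Ax; rewrite -(fxm Ax); exact: hfx.
have [[x Sx xm]|nolow] := pselect (exists2 x, S x & x < m); last first.
  apply/constant_case/ae_eq_average_of_ge => // y Ay.
  by rewrite leNgt; apply/negP => fym; apply: nolow; exists (f y); [exact: fS|].
have [[y Sy my]|nohigh] := pselect (exists2 y, S y & m < y); last first.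
  apply/constant_case/ae_eq_average_of_le => // z Az.
  by rewrite leNgt; apply/negP => mfz; apply: nohigh; exists (f z); [exact: fS|].
have [s supp] := convex_on_supporting_line hconv Sm
  (ex_intro2 _ _ x Sx xm) (ex_intro2 _ _ y Sy my).
have -> : h m * fine (P A) = \int[P]_(x in A) ((h m - s * m) + s * f x).
  by rewrite Rintegral_affine// Rintegral_average -/m; ring.
apply: le_Rintegral_ae => //; first exact: integrable_affine.
by apply: filterS hfg => z hfz Az; have := supp _ (fS _ Az); have := hfz Az; lra.
Qed.

End nonnull_event.
End average.

Section iterate_monotone.
Context {disp : Order.disp_t} {U : porderType disp} (S : set U) (g : U -> U).
Hypotheses (gS : forall x, S x -> S (g x))
  (g_mono : forall x y, S x -> S y -> (x <= y)%O -> (g x <= g y)%O).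

Lemma iter_in t x : S x -> S (iter t g x).
Proof. by elim: t => [|t IH] //= Sx; apply/gS/IH. Qed.

Lemma iter_le_in t x y : S x -> S y -> (x <= y)%O -> (iter t g x <= iter t g y)%O.
Proof.
by elim: t => [|t IH] //= Sx Sy xy; apply: g_mono; [exact: iter_in.. | exact: IH].
Qed.

End iterate_monotone.

Section drift.
Context {d : measure_display} {T : measurableType d} {R : realType}.
Variables (P : probability T R) (S : set R) (F : nat -> set (set T)).
Variables (X : nat -> T -> R) (h : R -> R).
Hypotheses (Sint : is_interval S) (Fmeas : forall t, F t `<=` measurable)
  (Fmono : forall t, F t `<=` F t.+1).
Hypotheses (XS : forall t w, S (X t w))
  (Xint : forall t, P.-integrable setT (EFin \o X t)).
Hypotheses (hconv : convex_on S h) (hS : forall x, S x -> S (htilde h x))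
  (hga : greed_admitting S h).
Hypothesis drift : forall t, exists Y : T -> R,
  is_cond_exp P (F t) (fun w => X t w - X t.+1 w) Y /\
  {ae P, forall w, h (X t w) <= Y w}.

Lemma average_drift t A : F t A -> 0 < fine (P A) ->
  average P A (X t.+1) <= htilde h (average P A (X t)).
Proof.
move=> FA PA; have mA := Fmeas FA.
have [Y [[_ Yint YA] hXY]] := drift t.
have hXYA : {ae P, forall w, A w -> h (X t w) <= Y w}.
  by apply: filterS hXY => w + _.
have := jensen_average mA PA Sint hconv (Xint t) Yint (fun w _ => XS t w) hXYA.
have -> : average P A Y = average P A (X t) - average P A (X t.+1).
  rewrite /average -mulrBl -RintegralB//; try exact: integrable_in.
  by rewrite /Rintegral YA.
by rewrite /htilde; lra.
Qed.

Lemma average_iter_le t A : F 0 A -> 0 < fine (P A) ->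
  average P A (X t) <= iter t (htilde h) (average P A (X 0)).
Proof.
move=> FA PA; have mA := Fmeas FA.
have avgS (s : nat) : S (average P A (X s)).
  exact: (average_in_interval mA PA Sint (Xint s) (fun w _ => XS s w)).
elim: t => [//|t IH] /=.
have FtA : F t A by elim: t {IH} => // t /Fmono.
apply: le_trans (average_drift FtA PA) _.
by apply: hga IH => //; exact: iter_in.
Qed.

End drift.

Lemma sigma_algebra_setI T (G : set (set T)) :
  sigma_algebra setT G -> setI_closed G.
Proof.
move=> [G0 GC GU] A B GA GB.
have -> : A `&` B = setT `\` ((setT `\` A) `|` (setT `\` B)).
  by rewrite !setTD setCU !setCK.
apply: (GC); rewrite -bigcup2E; apply: GU => -[|[|n]] /=.
- exact: GC.
- exact: GC.
- exact: G0.
Qed.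

Section ae_le_of_average_le.
Context {d : measure_display} {T : measurableType d} {R : realType}.
Variables (P : probability T R) (G : set (set T)) (S : set R) (g : R -> R).
Variables (Y Z : T -> R).
Hypotheses (Gsub : sub_sigma G) (Sint : is_interval S)
  (g_mono : forall x y, S x -> S y -> x <= y -> g x <= g y).
Hypotheses (Ymeas : G_measurable G Y) (Zmeas : G_measurable G Z)
  (Yint : P.-integrable setT (EFin \o Y)) (Zint : P.-integrable setT (EFin \o Z))
  (ZS : forall w, S (Z w)).
Hypothesis average_le : forall A, G A -> 0 < fine (P A) ->
  average P A Y <= g (average P A Z).

Let sublevel r := [set x | S x /\ g x < r].

Let sublevel_interval r : is_interval (sublevel r).
Proof.
move=> x y [Sx _] [Sy gyr] z xzy; have Sz : S z by exact: Sint Sx Sy _ xzy.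
by split=> //; case/andP: xzy => _ zy; exact: le_lt_trans (g_mono Sz Sy zy) gyr.
Qed.

Let exceed r := [set w | r <= Y w] `&` Z @^-1` sublevel r.

Let exceed_in r : G (exceed r).
Proof.
apply: (sigma_algebra_setI Gsub.1).
  apply: (Ymeas (B := [set x | r <= x])); apply: is_interval_measurable.
  by move=> x y rx _ z /andP[xz _]; exact: le_trans xz.
apply: (Zmeas (B := sublevel r)); exact: is_interval_measurable.
Qed.

Let exceed_null r : P (exceed r) = 0%E.
Proof.
have mB : measurable (exceed r) by exact: Gsub.2 _ (exceed_in r).
apply: contrapT => PB0.
have PB : 0 < fine (P (exceed r)).
  rewrite lt_neqAle fine_ge0 ?andbT//; apply: contra_notN PB0 => /eqP PB0.
  by rewrite -[P _]fineK ?fin_num_measure// -PB0.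
have r_le : r <= average P (exceed r) Y.
  rewrite ler_pdivlMr// -Rintegral_cst//; apply: le_Rintegral => //.
  - exact: finite_measure_integrable_cst.
  - exact: integrable_in.
  - by move=> w [].
have [_ g_lt] : sublevel r (average P (exceed r) Z).
  exact: (average_in_interval mB PB (@sublevel_interval r) Zint
    (fun w => @proj2 _ _)).
by have := average_le (exceed_in r) PB; lra.
Qed.

Lemma ae_le_of_average_le : {ae P, forall w, Y w <= g (Z w)}.
Proof.
pose rat_enum n : R := ratr (odflt 0%Q (pickle_inv n)).
have : \forall w \ae P, forall n, ~ exceed (rat_enum n) w.
  apply: ae_foralln => n; exists (exceed (rat_enum n)).
  split; [exact: Gsub.2 _ (exceed_in _) | exact: exceed_null |].
  by move=> w /= /contrapT.
apply: filterS => w notB; rewrite leNgt; apply/negP => gZY.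
have [q] := rat_in_itvoo gZY; rewrite in_itv /= => /andP[gZq qY].
apply: (notB (pickle q)); rewrite /rat_enum pickleK_inv /=.
by split; [exact: ltW | split].
Qed.

End ae_le_of_average_le.

Theorem theorem4 (d : measure_display) (T : measurableType d) (R : realType)
  (P : probability T R) (S : set R) (F : nat -> set (set T))
  (X : nat -> T -> R) (h : R -> R) :
  convex_set_R S ->
  filtration F ->
  adapted F X ->
  (forall t w, S (X t w)) ->
  (forall t, P.-integrable setT (EFin \o X t)) ->
  (forall x, S x -> 0 <= h x) ->
  convex_on S h ->
  greed_admitting S h ->
  (forall x, S x -> S (htilde h x)) ->
  (forall t, exists Y : T -> R,
      is_cond_exp P (F t) (fun w => X t w - X t.+1 w) Y /\
      {ae P, forall w, h (X t w) <= Y w}) ->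
  forall t,
    (forall Y : T -> R, is_cond_exp P (F 0%N) (X t) Y ->
       {ae P, forall w, Y w <= iter t (htilde h) (X 0%N w)}) /\
    \int[P]_(w in setT) X t w <= iter t (htilde h) (\int[P]_(w in setT) X 0%N w).
Proof.
move=> Sconv [Fsub Fmono] Xadapted XS Xint _ hconv hga hS drift t.
have Sint : is_interval S by move=> x y Sx Sy z; exact: Sconv.
have Fmeas s : F s `<=` measurable by exact: (Fsub s).2.
have average_le := average_iter_le Sint Fmeas Fmono XS Xint hconv hS hga drift t.
split.
- move=> Y [Ymeas Yint YA].
  apply: ae_le_of_average_le (Fsub 0%N) Sint _ Ymeas (Xadapted 0%N) Yint
    (Xint 0%N) (XS 0%N) _.
    by move=> x y Sx Sy; exact: (iter_le_in hS hga).
  by move=> A FA PA; rewrite {1}/average /Rintegral YA//; exact: average_le.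
- have [G0 GC _] := (Fsub 0%N).1.
  have FT : F 0%N setT by have := GC set0 G0; rewrite setD0.
  by have := average_le setT FT; rewrite /average probability_setT !divr1; apply.
Qed.
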